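(* Let $n \geq 1$, $z \geq 2$, $\epsilon > 0$, and let $\mathbf{f}_1^{(0)}, \dots, \mathbf{f}_n^{(0)}$ be probability vectors in $\mathbb{R}^z$. For $t \geq 1$ define recursively $$p_{i,j}^{(t)} = \frac{\alpha_i^{(t)}}{\epsilon + D\left(\mathbf{f}_i^{(t-1)}, \mathbf{f}_j^{(t-1)}\right)}, \qquad \mathbf{f}_i^{(t)} = \sum_{j=1}^n p_{i,j}^{(t)} \mathbf{f}_j^{(t-1)},$$ where $\alpha_i^{(t)} > 0$ normalizes so that $\sum_{j} p_{i,j}^{(t)} = 1$ and $D(\mathbf{u}, \mathbf{v}) = \sqrt{\frac{1}{z}\sum_{k=1}^{z} (u_k - v_k)^2}$. Let $R(\mathbf{g}, e) = 2g_e - \sum_{k=1}^z g_k^2$ be the quadratic scoring rule, and for constants $x > 0$ and $y \in \mathbb{R}$ let $R'(\mathbf{g}, e) = x R(\mathbf{g}, e) + y$. Then $R'$ is effective with respect to the weights $\{p_{i,j}^{(t)}\}$ at every time $t \ge 1$; that is, for every $t \ge 1$ and all $i, j, k \in \{1,\dots,n\}$, $$p_{i,j}^{(t)} < p_{i,k}^{(t)} \iff \mathbb{E}_{\mathbf{f}_i^{(t-1)}}\left[R'\left(\mathbf{f}_k^{(t-1)}\right)\right] > \mathbb{E}_{\mathbf{f}_i^{(t-1)}}\left[R'\left(\mathbf{f}_j^{(t-1)}\right)\right].$$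
   Context: For probability vectors $\mathbf{f}, \mathbf{g} \in \mathbb{R}^z$ and a scoring rule $S$, the $\mathbf{f}$-expected score of reporting $\mathbf{g}$ is $\mathbb{E}_{\mathbf{f}}[S(\mathbf{g})] = \sum_{e=1}^z f_e\, S(\mathbf{g}, e)$. *)

From mathcomp Require Import all_boot all_order all_algebra.
Set Implicit Arguments. Unset Strict Implicit. Unset Printing Implicit Defensive.
Import Order.TTheory GRing.Theory Num.Theory.
Local Open Scope ring_scope.

Section Defs.
Variable R : rcfType.

Definition prob_vec (z : nat) (f : 'I_z -> R) : Prop :=
  (forall e, 0 <= f e) /\ \sum_(e < z) f e = 1.

Definition Dist (z : nat) (u v : 'I_z -> R) : R :=
  Num.sqrt (z%:R^-1 * \sum_(k < z) (u k - v k) ^+ 2).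

Definition alpha (z n : nat) (eps : R) (g : 'I_n -> 'I_z -> R) (i : 'I_n) : R :=
  (\sum_(j < n) (eps + Dist (g i) (g j))^-1)^-1.

Definition weight (z n : nat) (eps : R) (g : 'I_n -> 'I_z -> R) (i j : 'I_n) : R :=
  alpha eps g i / (eps + Dist (g i) (g j)).

Fixpoint prof (z n : nat) (eps : R) (f0 : 'I_n -> 'I_z -> R) (t : nat)
  : 'I_n -> 'I_z -> R :=
  match t with
  | 0 => f0
  | t'.+1 => let g := prof eps f0 t' in
             fun i k => \sum_(j < n) weight eps g i j * g j k
  end.

(* p_{i,j}^{(t)} for t >= 1, computed from f^{(t-1)} *)
Definition p (z n : nat) (eps : R) (f0 : 'I_n -> 'I_z -> R) (t : nat) (i j : 'I_n) : R :=
  weight eps (prof eps f0 t.-1) i j.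

Definition expected_score (z : nat) (S : ('I_z -> R) -> 'I_z -> R)
  (f g : 'I_z -> R) : R := \sum_(e < z) f e * S g e.

Definition quad_rule (z : nat) (g : 'I_z -> R) (e : 'I_z) : R :=
  2 * g e - \sum_(k < z) g k ^+ 2.

Definition affine_quad_rule (z : nat) (x y : R) (g : 'I_z -> R) (e : 'I_z) : R :=
  x * quad_rule g e + y.
End Defs.

From mathcomp Require Import all_boot all_order all_algebra.
From mathcomp Require Import ring.
Set Implicit Arguments. Unset Strict Implicit. Unset Printing Implicit Defensive.
Import Order.TTheory GRing.Theory Num.Theory.
Local Open Scope ring_scope.

(* The weights are strictly decreasing in the distance D(f_i, f_j), which is a
   strictly increasing function of the squared Euclidean distance
   |f_i - f_j|^2.  On the other side, for a probability vector f the
   f-expected quadratic score of a report g equals |f|^2 - |f - g|^2, so the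
   affine rescaling R' = x R + y (x > 0) also ranks reports by decreasing
   |f - g|^2.  Both orders therefore coincide, and the profiles stay
   probability vectors because every row of weights sums to 1. *)

Definition sqr_dist (R : pzRingType) (z : nat) (u v : 'I_z -> R) : R :=
  \sum_(k < z) (u k - v k) ^+ 2.

Lemma sqr_dist_ge0 (R : realDomainType) (z : nat) (u v : 'I_z -> R) :
  0 <= sqr_dist u v.
Proof. by apply: sumr_ge0 => k _; apply: sqr_ge0. Qed.

Lemma ltr_Dist (R : rcfType) (z : nat) (u v w : 'I_z -> R) : (0 < z)%N ->
  (Dist u v < Dist u w) = (sqr_dist u v < sqr_dist u w).
Proof.
move=> z_gt0; have z1_gt0 : 0 < (z%:R : R)^-1 by rewrite invr_gt0 ltr0n.
rewrite /Dist -/(sqr_dist u v) -/(sqr_dist u w).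
by rewrite !ltNge ler_sqrt ?ler_pM2l // mulr_ge0 ?sqr_dist_ge0 ?ltW.
Qed.

Section Weights.
Variables (R : rcfType) (z n : nat) (eps : R).
Hypothesis eps_gt0 : 0 < eps.

Lemma eps_Dist_gt0 (u v : 'I_z -> R) : 0 < eps + Dist u v.
Proof. by apply: (lt_le_trans eps_gt0); rewrite lerDl sqrtr_ge0. Qed.

Lemma sum_inv_eps_Dist_gt0 (g : 'I_n -> 'I_z -> R) (i : 'I_n) :
  0 < \sum_(j < n) (eps + Dist (g i) (g j))^-1.
Proof.
rewrite (bigD1 i) //=; apply: ltr_wpDr; last by rewrite invr_gt0 eps_Dist_gt0.
by apply: sumr_ge0 => j _; rewrite invr_ge0 ltW ?eps_Dist_gt0.
Qed.

Lemma alpha_gt0 (g : 'I_n -> 'I_z -> R) (i : 'I_n) : 0 < alpha eps g i.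
Proof. by rewrite invr_gt0 sum_inv_eps_Dist_gt0. Qed.

Lemma sum_weight (g : 'I_n -> 'I_z -> R) (i : 'I_n) :
  \sum_(j < n) weight eps g i j = 1.
Proof. by rewrite -mulr_sumr mulVf // gt_eqF ?sum_inv_eps_Dist_gt0. Qed.

Lemma ltr_weight (g : 'I_n -> 'I_z -> R) (i j k : 'I_n) :
  (weight eps g i j < weight eps g i k) = (Dist (g i) (g k) < Dist (g i) (g j)).
Proof.
by rewrite ltr_pM2l ?alpha_gt0 // ltf_pV2 ?posrE ?eps_Dist_gt0 // ltrD2l.
Qed.

Lemma sum_prof (f0 : 'I_n -> 'I_z -> R) :
  (forall i, \sum_(e < z) f0 i e = 1) ->
  forall t i, \sum_(e < z) prof eps f0 t i e = 1.
Proof.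
move=> sum_f0; elim=> [|t IHt] i //=.
rewrite exchange_big /=.
under eq_bigr => j _ do rewrite -mulr_sumr IHt mulr1.
exact: sum_weight.
Qed.

End Weights.

Lemma expected_affine_quad_rule (R : rcfType) (z : nat) (x y : R)
    (f g : 'I_z -> R) :
  \sum_(e < z) f e = 1 ->
  expected_score (affine_quad_rule x y) f g =
  x * (\sum_(e < z) f e ^+ 2 - sqr_dist f g) + y.
Proof.
move=> sum_f; rewrite /expected_score /affine_quad_rule /quad_rule /sqr_dist.
set G := \sum_(k < z) g k ^+ 2.
rewrite (eq_bigr (fun e => x * (f e ^+ 2 - (f e - g e) ^+ 2) +
   (x * g e ^+ 2 + (y - x * G) * f e))); last by move=> e _; ring.
rewrite big_split /= -mulr_sumr big_split /= sumrN big_split /= -!mulr_sumr sum_f.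
rewrite -/G; ring.
Qed.

Lemma ltr_expected_affine_quad_rule (R : rcfType) (z : nat) (x y : R)
    (f g h : 'I_z -> R) :
  0 < x -> \sum_(e < z) f e = 1 ->
  (expected_score (affine_quad_rule x y) f g <
   expected_score (affine_quad_rule x y) f h) = (sqr_dist f h < sqr_dist f g).
Proof.
move=> x_gt0 sum_f; rewrite !expected_affine_quad_rule //.
by rewrite ltrD2r ltr_pM2l // ltrD2l ltrN2.
Qed.

Theorem corollary2 (R : rcfType) (n z : nat) (eps x y : R)
  (f0 : 'I_n -> 'I_z -> R) :
  (1 <= n)%N -> (2 <= z)%N -> 0 < eps -> 0 < x ->
  (forall i, prob_vec (f0 i)) ->
  forall t : nat, (1 <= t)%N ->
  forall i j k : 'I_n,
    p eps f0 t i j < p eps f0 t i k <->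
    expected_score (affine_quad_rule x y) (prof eps f0 t.-1 i) (prof eps f0 t.-1 k)
    > expected_score (affine_quad_rule x y) (prof eps f0 t.-1 i) (prof eps f0 t.-1 j).
Proof.
move=> _ z_ge2 eps_gt0 x_gt0 f0_prob t _ i j k.
have sum_f0 i' : \sum_(e < z) f0 i' e = 1 by case: (f0_prob i').
rewrite /p ltr_weight // ltr_Dist ?(leq_trans _ z_ge2) //.
by rewrite ltr_expected_affine_quad_rule // sum_prof.
Qed.
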